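(* Let $\mu>0$, $U>0$ and $\delta>2\mu U^{-1}$. Let $\gamma$ be a density matrix on $\mathbb{C}^\Lambda$ with density $\rho(x)=\gamma_{x,x}$, $\Omega=\{x:\rho(x)<\delta\}$, $\Omega^c=\{x:\rho(x)\ge\delta\}$, and define $\tilde\rho(x)=\rho(x)$ for $x\in\Omega^c$ and $\tilde\rho(x)=\min\{\frac{\mu}{2U},\rho(x)\}$ for $x\in\Omega$ (viewed also as a diagonal multiplication operator). Then $$\mathrm{Tr}\{[K_\mu+U\tilde\rho]_-\}\ \ge\ \mathrm{Tr}\{[P_\Omega(K_\mu+U\tilde\rho)P_\Omega]_-\}-\frac{8d^2}{U\delta}\,|\partial\Omega|.$$
   Context: $\Lambda=\mathbb{Z}_L^d$; $T_{x,y}=1$ if $|x-y|_1=1$, else $0$; $\Delta_{x,y}=T_{x,y}-2d\delta_{x,y}$; $K_\mu=-\Delta-\mu$; $[X]_-=\min\{X,0\}$. $P_A$ denotes the orthogonal projection of $\mathbb{C}^\Lambda$ onto functions supported in $A\subseteq\Lambda$. $\partial\Omega=\{x\in\Omega:\mathrm{dist}_1(x,\Omega^c)=1\}$ with $\mathrm{dist}_1$ the graph distance; $|\partial\Omega|$ its cardinality. *)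

From HB Require Import structures.
From mathcomp Require Import all_boot all_order all_algebra.
From mathcomp Require Import complex.
From mathcomp Require Import reals.
Set Implicit Arguments. Unset Strict Implicit. Unset Printing Implicit Defensive.
Import Order.TTheory GRing.Theory Num.Theory.
Local Open Scope ring_scope.

Section Lattice.
Variables (d L : nat).

(* The discrete torus Lambda = Z_L^d : maps from the d coordinates to Z/LZ. *)
Definition site := {ffun 'I_d -> 'I_L}.

Definition cdist (a b : 'I_L) : nat :=
  let k := if (a <= b)%N then (b - a)%N else (a - b)%N in minn k (L - k).

Definition l1dist (x y : site) : nat := (\sum_(i < d) cdist (x i) (y i))%N.

(* Lattice points indexed by the ordinal 'I_#|Lambda| (matrix indices). *)
Definition pt (i : 'I_#|{: site}|) : site := enum_val i.

Definition bdry (Om : {set site}) : {set site} :=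
  [set x in Om | [exists y, (y \notin Om) && (l1dist x y == 1)%N]].

Variable R : realType.
Local Notation C := (R[i]).
Local Notation N := #|{: site}|.

Definition Tmx : 'M[C]_N := \matrix_(i, j) (l1dist (pt i) (pt j) == 1%N)%:R.
Definition Lapmx : 'M[C]_N := Tmx - (2 * d)%:R%:M.
Definition Kmx (mu : R) : 'M[C]_N := - Lapmx - (mu%:C)%C%:M.

Definition multmx (f : site -> R) : 'M[C]_N :=
  diag_mx (\row_i ((f (pt i))%:C)%C).

Definition projmx (A : {set site}) : 'M[C]_N :=
  diag_mx (\row_i ((pt i \in A)%:R : C)).

End Lattice.

Local Open Scope sesquilinear_scope.

Definition density_matrix (R : realType) n (g : 'M[R[i]]_n) : Prop :=
  g ^t* = g /\
  forall v : 'rV[R[i]]_n,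
    0 <= (v *m g *m v ^t*) 0 0 /\ (v *m g *m v ^t*) 0 0 <= (v *m v ^t*) 0 0.

(* Tr [A]_- : sum of the negative eigenvalues (with multiplicity) of a
   self-adjoint matrix A, via the spectral decomposition of spectral.v *)
Definition negtrace (R : realType) n (A : 'M[R[i]]_n) : R :=
  \sum_(i < n) Num.min (complex.Re (spectral_diag A 0 i)) 0.

From HB Require Import structures.
From mathcomp Require Import all_boot all_order all_algebra.
From mathcomp Require Import complex.
From mathcomp Require Import reals.
From mathcomp Require Import ring lra zify.

(* Split H = K_mu + U rhot~ into blocks along P = P_Om and Q = P_{Om^c}.  For
   v = Pv + Qv the cross term 2 Re <Pv, H Qv> is at least
   -t |Q H P v|^2 - |Qv|^2 / t, and on the range of Q we have H >= U delta - mu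
   >= 1/t with t = 2 / (U delta), because -Delta >= 0 and rho~ >= delta there.
   Hence <v, H v> >= <v, PHP v> - t |Q H P v|^2.  Summing this over the
   eigenvectors of H with negative eigenvalue and using the variational
   principle for Tr[.]_- gives Tr[H]_- >= Tr[PHP]_- - t ||P H Q||_2^2.  Finally
   P H Q only contains the hoppings from the boundary of Om to Om^c, so
   ||P H Q||_2^2 <= 2d |bdry Om|, and 2d t <= 8 d^2 / (U delta). *)

Set Implicit Arguments. Unset Strict Implicit. Unset Printing Implicit Defensive.
Import Order.TTheory GRing.Theory Num.Theory.
Local Open Scope ring_scope.
Local Open Scope sesquilinear_scope.

Section Sqnorm.
Variable R : rcfType.
Implicit Types (t r : R) (w z : R[i]).

Definition sqnorm z : R := complex.Re z ^+ 2 + complex.Im z ^+ 2.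

Lemma sqnorm_ge0 z : 0 <= sqnorm z.
Proof. by rewrite addr_ge0 // sqr_ge0. Qed.

Lemma sqnorm0 : sqnorm 0 = 0.
Proof. by rewrite /sqnorm /= expr0n addr0. Qed.

Lemma sqnormR r : sqnorm r%:C%C = r ^+ 2.
Proof. by rewrite /sqnorm /= expr0n addr0. Qed.

Lemma mulcJ_sqnorm z : z * z^* = (sqnorm z)%:C%C.
Proof.
case: z => a b; apply/eqP; rewrite eq_complex /=.
by apply/andP; split; apply/eqP; rewrite /sqnorm /=; ring.
Qed.

Lemma ReD w z : complex.Re (w + z) = complex.Re w + complex.Re z.
Proof. by case: w; case: z. Qed.

Lemma Re_sum I (r : seq I) (P : pred I) (F : I -> R[i]) :
  complex.Re (\sum_(i <- r | P i) F i) = \sum_(i <- r | P i) complex.Re (F i).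
Proof. exact: (big_morph _ ReD (erefl (complex.Re (0 : R[i])))). Qed.

Lemma conjR r : (r%:C%C)^* = r%:C%C.
Proof. exact: conjc_real. Qed.

Lemma ReJ z : complex.Re z^* = complex.Re z.
Proof. by case: z. Qed.

(* Expand [0 <= sqnorm (t w + z) / t]. *)
Lemma Re_mulJ_ge t w z : 0 < t ->
  - (t * sqnorm w) - sqnorm z / t <= 2 * complex.Re (w * z^*).
Proof.
move=> t_gt0; have := sqnorm_ge0 (t%:C%C * w + z).
case: w => a b; case: z => c e; rewrite /sqnorm /= => sq_ge0.
rewrite -subr_le0; set lhs := (X in X <= 0).
have -> : lhs = - (((t * a - 0 * b + c) ^+ 2 + (t * b + 0 * a + e) ^+ 2) / t).
  by rewrite /lhs; field; rewrite gt_eqF.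
by rewrite oppr_le0 divr_ge0 // ltW.
Qed.

Lemma Re_mulJ_le w z : 2 * complex.Re (w * z^*) <= sqnorm w + sqnorm z.
Proof.
case: w => a b; case: z => c e; rewrite /sqnorm /=.
have : 0 <= (a - c) ^+ 2 + (b - e) ^+ 2 by rewrite addr_ge0 // sqr_ge0.
lra.
Qed.

Lemma schur_test (I : finType) (w : I -> I -> R) (c : R) (f : I -> R[i]) :
  (forall i j, w i j = w j i) -> (forall i j, 0 <= w i j) -> (forall i, \sum_j w i j <= c) ->
  \sum_i \sum_j w i j * complex.Re (f i * (f j)^*) <= c * \sum_i sqnorm (f i).
Proof.
move=> wC w_ge0 w_le.
have sym : \sum_i \sum_j w i j * sqnorm (f j) = \sum_i \sum_j w i j * sqnorm (f i).
  by rewrite exchange_big; apply: eq_bigr => i _; apply: eq_bigr => j _; rewrite wC.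
have split : \sum_i \sum_j w i j * (sqnorm (f i) + sqnorm (f j)) =
    \sum_i \sum_j w i j * sqnorm (f i) + \sum_i \sum_j w i j * sqnorm (f j).
  rewrite -big_split; apply: eq_bigr => i _.
  by rewrite -big_split; apply: eq_bigr => j _; rewrite mulrDr.
have cross : 2 * \sum_i \sum_j w i j * complex.Re (f i * (f j)^*) <=
    \sum_i \sum_j w i j * (sqnorm (f i) + sqnorm (f j)).
  rewrite mulr_sumr; apply: ler_sum => i _; rewrite mulr_sumr; apply: ler_sum => j _.
  by rewrite mulrCA ler_wpM2l // Re_mulJ_le.
have rows : \sum_i \sum_j w i j * sqnorm (f i) <= c * \sum_i sqnorm (f i).
  rewrite mulr_sumr; apply: ler_sum => i _.
  by rewrite -mulr_suml ler_wpM2r ?sqnorm_ge0.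
lra.
Qed.

End Sqnorm.

Section Forms.
Variable R : realType.
Local Notation C := R[i].

Definition sqfrob m p (M : 'M[C]_(m, p)) : R := \sum_i \sum_j sqnorm (M i j).

Definition qform n (A : 'M[C]_n) (v : 'rV[C]_n) : R := complex.Re ((v *m A *m v^t*) 0 0).

Lemma sqfrob_ge0 m p (M : 'M[C]_(m, p)) : 0 <= sqfrob M.
Proof. by do 2!apply: sumr_ge0 => ? _; exact: sqnorm_ge0. Qed.

Lemma sqfrob_rowE p (v : 'rV[C]_p) : sqfrob v = \sum_j sqnorm (v 0 j).
Proof. by rewrite /sqfrob big_ord1. Qed.

Lemma sqfrob_rows m p (M : 'M[C]_(m, p)) : sqfrob M = \sum_i sqfrob (row i M).
Proof. by apply: eq_bigr => i _; rewrite sqfrob_rowE; apply: eq_bigr => j _; rewrite mxE. Qed.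

Lemma sqfrobE m p (M : 'M[C]_(m, p)) : (sqfrob M)%:C%C = \tr (M *m M^t*).
Proof.
rewrite /sqfrob rmorph_sum; apply: eq_bigr => i _.
rewrite rmorph_sum !mxE; apply: eq_bigr => j _.
by rewrite !mxE mulcJ_sqnorm.
Qed.

Lemma sqfrob_unitarymx m p (S : 'M[C]_m) (M : 'M[C]_(m, p)) :
  S \is unitarymx -> sqfrob (S *m M) = sqfrob M.
Proof.
move=> S_unitary; apply: complexI; rewrite !sqfrobE trmx_mul map_mxM.
by rewrite mulmxA -mulmxA mxtrace_mulC mulmxA mulmxKtV // mxtrace_mulC.
Qed.

Lemma hermsymmx_adj n (A : 'M[C]_n) : A^t* = A -> A \is hermsymmx.
Proof. by move=> A_adj; apply/is_hermitianmxP; rewrite expr0 scale1r A_adj. Qed.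

Lemma adjmxE m p (A : 'M[C]_(m, p)) i j : (A^t*) i j = (A j i)^*.
Proof. by rewrite !mxE. Qed.

Lemma adjmx_mul m n p (A : 'M[C]_(m, n)) (B : 'M[C]_(n, p)) : (A *m B)^t* = B^t* *m A^t*.
Proof. by rewrite trmx_mul map_mxM. Qed.

Section Quadratic.
Variable n : nat.
Implicit Types (A H P Q : 'M[C]_n) (u v : 'rV[C]_n).

Lemma qformE A v :
  qform A v = \sum_x \sum_y complex.Re (v 0 x * A x y * (v 0 y)^*).
Proof.
rewrite /qform mxE Re_sum exchange_big; apply: eq_bigr => y _.
by rewrite !mxE mulr_suml Re_sum; apply: eq_bigr => x _.
Qed.

Lemma qformD H u v : H^t* = H ->
  qform H (u + v) = qform H u + 2 * complex.Re ((u *m H *m v^t*) 0 0) + qform H v.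
Proof.
move=> H_adj; have conj_cross : (v *m H *m u^t*) 0 0 = ((u *m H *m v^t*) 0 0)^*.
  have -> : ((u *m H *m v^t*) 0 0)^* = ((u *m H *m v^t*)^t*) 0 0 by rewrite !mxE.
  by rewrite !adjmx_mul trmxCK H_adj mulmxA.
rewrite /qform linearD map_mxD !mulmxDl !mulmxDr mxE [X in X + _]mxE [X in _ + X]mxE.
by rewrite conj_cross !ReD ReJ; ring.
Qed.

Lemma qform_spectral A v : A \is hermsymmx ->
  qform A v = \sum_j complex.Re (spectral_diag A 0 j) * sqnorm ((v *m (spectralmx A)^t*) 0 j).
Proof.
move=> A_herm; have /orthomx_spectralP A_def := hermitian_normalmx A_herm.
rewrite invmx_unitary ?spectral_unitarymx // in A_def.
set S := spectralmx A in A_def *; set s := spectral_diag A in A_def *.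
rewrite /qform A_def.
have -> : v *m (S^t* *m diag_mx s *m S) *m v^t* =
          (v *m S^t*) *m diag_mx s *m (v *m S^t*)^t*.
  by rewrite adjmx_mul trmxCK !mulmxA.
rewrite mul_mx_diag mxE Re_sum; apply: eq_bigr => j _.
rewrite !mxE mulrAC mulcJ_sqnorm; case: (s 0 j) => a b /=; ring.
Qed.

Lemma qform_spectral_row A i : A \is hermsymmx ->
  qform A (row i (spectralmx A)) = complex.Re (spectral_diag A 0 i).
Proof.
move=> A_herm; rewrite qform_spectral // (bigD1 i) //= big1 ?addr0.
  by rewrite -row_mul (unitarymxP _) ?spectral_unitarymx // !mxE eqxx sqnormR expr1n mulr1.
move=> j ne_ji; rewrite -row_mul (unitarymxP _) ?spectral_unitarymx // !mxE eq_sym.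
by rewrite (negbTE ne_ji) sqnormR expr0n mulr0.
Qed.

Lemma negtrace_spectral A : A \is hermsymmx ->
  negtrace A = \sum_(i | complex.Re (spectral_diag A 0 i) < 0) qform A (row i (spectralmx A)).
Proof.
move=> A_herm; rewrite /negtrace (bigID (fun i => complex.Re (spectral_diag A 0 i) < 0)) /=.
rewrite [X in _ + X]big1 ?addr0 => [|i]; last by rewrite -leNgt => ?; rewrite min_r.
by apply: eq_bigr => i ?; rewrite qform_spectral_row // min_l // ltW.
Qed.

(* In the eigenbasis of [A], the weights of the rows [row i P], [i \in F], on
   each eigenvector add up to at most 1. *)
Lemma negtrace_le_qform A P (F : pred 'I_n) : A \is hermsymmx -> P \is unitarymx ->
  negtrace A <= \sum_(i | F i) qform A (row i P).
Proof.
move=> A_herm P_unitary; set M := P *m (spectralmx A)^t*.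
have M_unitary : M \is unitarymx.
  by rewrite mul_unitarymx // trmxC_unitary spectral_unitarymx.
have col_le1 j : \sum_(i | F i) sqnorm (M i j) <= 1.
  apply: le_trans (_ : \sum_i sqnorm (M i j) <= 1).
    by rewrite [X in _ <= X](bigID F) /= lerDl sumr_ge0 // => i _; exact: sqnorm_ge0.
  have MtM : M^t* *m M = 1%:M by rewrite -[M^t*]mul1mx mulmxKtV.
  have -> : \sum_i sqnorm (M i j) = complex.Re ((M^t* *m M) j j).
    by rewrite mxE Re_sum; apply: eq_bigr => i _; rewrite !mxE mulrC mulcJ_sqnorm.
  by rewrite MtM mxE eqxx.
have qformP i : qform A (row i P) =
    \sum_j complex.Re (spectral_diag A 0 j) * sqnorm (M i j).
  by rewrite qform_spectral //; apply: eq_bigr => j _; rewrite -row_mul mxE.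
rewrite /negtrace (eq_bigr _ (fun i _ => qformP i)) exchange_big /=.
apply: ler_sum => j _; set c := Num.min _ 0.
have c_le0 : c <= 0 by rewrite ge_min lexx orbT.
have c_le : c <= complex.Re (spectral_diag A 0 j) by rewrite ge_min lexx.
apply: le_trans (_ : \sum_(i | F i) c * sqnorm (M i j) <= _); last first.
  by apply: ler_sum => i _; rewrite ler_wpM2r ?sqnorm_ge0.
by rewrite -mulr_sumr -[X in X <= _]mulr1 ler_wnM2l.
Qed.

(* Split [v = vP + vQ]: the cross term is bounded by AM-GM with weight [t] and
   the resulting [|vQ|^2 / t] is absorbed by the gap of [H] on the range of [Q]. *)
Lemma qform_compression H P Q t v : 0 < t ->
  H^t* = H -> P^t* = P -> Q^t* = Q -> Q *m Q = Q -> P + Q = 1%:M ->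
  t^-1 * sqfrob (v *m Q) <= qform H (v *m Q) ->
  qform (P *m H *m P) v - t * sqfrob (v *m P *m H *m Q) <= qform H v.
Proof.
move=> t_gt0 H_adj P_adj Q_adj QQ PQ HQ.
set w := v *m P *m H *m Q; set b := v *m Q.
have -> : qform H v = qform H (v *m P + b) by rewrite -mulmxDr PQ mulmx1.
have -> : qform (P *m H *m P) v = qform H (v *m P).
  by rewrite /qform adjmx_mul P_adj !mulmxA.
have cross : (v *m P *m H *m b^t*) 0 0 = \sum_k w 0 k * (b 0 k)^*.
  have -> : v *m P *m H *m b^t* = w *m b^t*.
    by rewrite /w /b adjmx_mul Q_adj !mulmxA -(mulmxA _ Q Q) QQ.
  by rewrite mxE; apply: eq_bigr => k _; rewrite !mxE.
have cross_ge : - (t * sqfrob w) - sqfrob b / t <= 2 * complex.Re ((v *m P *m H *m b^t*) 0 0).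
  rewrite cross Re_sum !sqfrob_rowE !mulr_sumr mulr_suml -sumrN -sumrB.
  by apply: ler_sum => k _; exact: Re_mulJ_ge.
rewrite qformD //; rewrite mulrC in HQ; lra.
Qed.

Lemma negtrace_compression H P Q t : 0 < t ->
  H^t* = H -> P^t* = P -> Q^t* = Q -> Q *m Q = Q -> P + Q = 1%:M ->
  (forall v, t^-1 * sqfrob (v *m Q) <= qform H (v *m Q)) ->
  negtrace (P *m H *m P) - t * sqfrob (P *m H *m Q) <= negtrace H.
Proof.
move=> t_gt0 H_adj P_adj Q_adj QQ PQ HQ.
have H_herm := hermsymmx_adj H_adj.
have PHP_herm : P *m H *m P \is hermsymmx.
  by apply: hermsymmx_adj; rewrite !adjmx_mul H_adj P_adj mulmxA.
have S_unitary := spectral_unitarymx H; set S := spectralmx H in S_unitary *.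
set F := fun i => complex.Re (spectral_diag H 0 i) < 0.
have cross_le : \sum_(i | F i) sqfrob (row i S *m P *m H *m Q) <= sqfrob (P *m H *m Q).
  under eq_bigr do rewrite -!row_mul.
  rewrite -(sqfrob_unitarymx _ S_unitary) !mulmxA sqfrob_rows [X in _ <= X](bigID F) /=.
  by rewrite lerDl sumr_ge0 // => i _; exact: sqfrob_ge0.
rewrite [negtrace H]negtrace_spectral // -/S -/F.
apply: le_trans (_ : \sum_(i | F i) (qform (P *m H *m P) (row i S)
    - t * sqfrob (row i S *m P *m H *m Q)) <= _); last first.
  by apply: ler_sum => i _; exact: qform_compression.
rewrite sumrB -mulr_sumr lerB ?negtrace_le_qform //.
by rewrite ler_wpM2l // ltW.
Qed.
End Quadratic.
End Forms.

Section Torus.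
Variable L : nat.
Implicit Types a b : 'I_L.

Lemma cdistC a b : cdist a b = cdist b a.
Proof. by rewrite /cdist; case: (leqP a b); case: (leqP b a); lia. Qed.

Lemma cdist_eq0 a b : cdist a b = 0%N -> a = b.
Proof.
have := ltn_ord a; have := ltn_ord b.
by rewrite /cdist => ? ?; case: leqP => ? ?; apply: val_inj => /=; lia.
Qed.

Lemma cdist_eq1 a b : cdist a b = 1%N -> b = ordS a \/ b = ord_pred a.
Proof.
have ltaL := ltn_ord a; have ltbL := ltn_ord b.
have valS : val (ordS a) = (if a.+1 == L then 0 else a.+1)%N.
  by rewrite /=; case: eqP => [->|ne]; [exact: modnn | apply: modn_small; lia].
have valP : val (ord_pred a) = (if a == 0 :> nat then L.-1 else a.-1)%N.
  rewrite /=; case: eqP => [->|ne]; first by rewrite add0n modn_small; lia.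
  have -> : (a + L).-1 = a.-1 + L by lia.
  by rewrite modnDr modn_small; lia.
rewrite /cdist => h.
suff: (val b == val (ordS a)) || (val b == val (ord_pred a)).
  by case/orP=> /eqP/val_inj; [left | right].
rewrite valS valP; move: h; case: leqP => ?; case: (a.+1 =P L) => ?;
  by case: (nat_of_ord a =P 0%N) => ? /= ?; lia.
Qed.

End Torus.

Section Neighbours.
Variables d L : nat.
Implicit Types x y : site d L.

Lemma l1distC x y : l1dist x y = l1dist y x.
Proof. by apply: eq_bigr => i _; rewrite cdistC. Qed.

Definition step x (i : 'I_d) (up : bool) : site d L :=
  [ffun j => if j == i then (if up then ordS (x i) else ord_pred (x i)) else x j].

Lemma l1dist_eq1 x y : l1dist x y = 1%N -> exists i up, y = step x i up.
Proof.
move=> xy1; have [i ne_i] : exists i, cdist (x i) (y i) != 0%N.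
  apply/existsP; apply: contraT; rewrite negb_exists => /forallP all0.
  by move: xy1; rewrite /l1dist big1 // => i _; apply/eqP; rewrite -[_ == _]negbK.
move: xy1; rewrite /l1dist (bigD1 i) //=.
move: ne_i; rewrite -lt0n => ne_i sum1.
have cd1 : cdist (x i) (y i) = 1%N by lia.
move/eqP: sum1; rewrite cd1 -[X in _ == X]addn0 eqn_add2l.
rewrite sum_nat_eq0 => /forallP others.
have same j : j != i -> y j = x j.
  by move=> ne_ji; apply/esym/cdist_eq0/eqP; have := others j; rewrite ne_ji.
have [e|e] := cdist_eq1 cd1; [exists i, true | exists i, false];
  by apply/ffunP => j; rewrite ffunE; case: eqP => [->|/eqP]; [| exact: same].
Qed.

Lemma card_l1dist_eq1 x : (#|[set y | l1dist x y == 1%N]| <= 2 * d)%N.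
Proof.
apply: (@leq_trans #|[set step x p.1 p.2 | p in [set: 'I_d * bool]]|).
  apply/subset_leq_card/subsetP => y; rewrite inE => /eqP/l1dist_eq1[i [up ->]].
  by apply/imsetP; exists (i, up).
by rewrite (leq_trans (leq_imset_card _ _)) // cardsT card_prod card_ord card_bool mulnC.
Qed.

End Neighbours.

Section Hamiltonian.
Variables (d L : nat) (R : realType).
Local Notation N := #|{: site d L}|.
Local Notation pt := (@pt d L).

Lemma sum_pt (F : site d L -> R) : \sum_(i < N) F (pt i) = \sum_x F x.
Proof. by rewrite -big_enum_val. Qed.

Lemma sum_pt_mem (A : {set site d L}) : \sum_(i < N) (pt i \in A)%:R = #|A|%:R :> R.
Proof.
rewrite (sum_pt (fun x => (x \in A)%:R)) -sum1_card natr_sum [RHS]big_mkcond /=.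
by apply: eq_bigr => x _; case: (x \in A).
Qed.

Definition hop (i j : 'I_N) : R := (l1dist (pt i) (pt j) == 1%N)%:R.

Lemma hopC i j : hop i j = hop j i.
Proof. by rewrite /hop l1distC. Qed.

Lemma hop_ge0 i j : 0 <= hop i j.
Proof. exact: ler0n. Qed.

Lemma sum_hop_le i : \sum_j hop i j <= 2 * d%:R.
Proof.
rewrite (sum_pt (fun y => (l1dist (pt i) y == 1%N)%:R)).
have -> : \sum_y (l1dist (pt i) y == 1%N)%:R = #|[set y | l1dist (pt i) y == 1%N]|%:R :> R.
  rewrite -sum1_card natr_sum [RHS]big_mkcond /=.
  by apply: eq_bigr => y _; rewrite inE; case: eqP.
by rewrite -natrM ler_nat card_l1dist_eq1.
Qed.

Variables (mu U : R) (rhot : site d L -> R).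

Definition hamiltonian : 'M[R[i]]_N := Kmx d L mu + U%:C%C *: multmx rhot.

Definition hamiltonian_entry (i j : 'I_N) : R :=
  - hop i j + (i == j)%:R * (2 * d%:R - mu + U * rhot (pt i)).

Lemma hamiltonianE i j : hamiltonian i j = (hamiltonian_entry i j)%:C%C.
Proof.
rewrite /hamiltonian /Kmx /Lapmx /Tmx /multmx /hamiltonian_entry /hop !mxE.
rewrite !rmorphD !rmorphN !rmorphM !rmorph_nat /=.
have natC k : (k%:R : R[i]) = (k%:R : R)%:C%C by rewrite rmorph_nat.
case: (i == j); case: (_ == 1%N);
  rewrite ?mulr1n ?mulr0n ?mul1r ?mul0r ?addr0 ?subr0 ?oppr0 ?natC;
  by apply/eqP; rewrite eq_complex /=; apply/andP; split; apply/eqP; ring.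
Qed.

Lemma hamiltonian_adj : hamiltonian^t* = hamiltonian.
Proof.
apply/matrixP => i j; rewrite adjmxE !hamiltonianE conjR /hamiltonian_entry hopC.
by have [->|_] := eqVneq i j; rewrite // !mul0r.
Qed.

Lemma qform_hamiltonian_ge (v : 'rV[R[i]]_N) :
  \sum_x (U * rhot (pt x) - mu) * sqnorm (v 0 x) <= qform hamiltonian v.
Proof.
have entry x y : complex.Re (v 0 x * hamiltonian x y * (v 0 y)^*) =
    hamiltonian_entry x y * complex.Re (v 0 x * (v 0 y)^*).
  by rewrite hamiltonianE; case: (v 0 x) => a b; case: (v 0 y) => c e /=; ring.
have row_sum x : \sum_y hamiltonian_entry x y * complex.Re (v 0 x * (v 0 y)^*) =
    (2 * d%:R - mu + U * rhot (pt x)) * sqnorm (v 0 x)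
    - \sum_y hop x y * complex.Re (v 0 x * (v 0 y)^*).
  rewrite /hamiltonian_entry; under eq_bigr do rewrite mulrDl mulNr.
  rewrite big_split sumrN /= addrC [X in X - _](bigD1 x) //= big1 => [|y]; last first.
    by rewrite eq_sym => /negbTE ->; rewrite !mul0r.
  by rewrite eqxx mul1r mulcJ_sqnorm addr0.
have split : \sum_x (2 * d%:R - mu + U * rhot (pt x)) * sqnorm (v 0 x) =
    2 * d%:R * \sum_x sqnorm (v 0 x) + \sum_x (U * rhot (pt x) - mu) * sqnorm (v 0 x).
  by rewrite mulr_sumr -big_split; apply: eq_bigr => x _ /=; ring.
have := schur_test (fun x => v 0 x) hopC hop_ge0 sum_hop_le.
have -> : qform hamiltonian v = \sum_x ((2 * d%:R - mu + U * rhot (pt x)) * sqnorm (v 0 x)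
    - \sum_y hop x y * complex.Re (v 0 x * (v 0 y)^*)).
  by rewrite qformE; apply: eq_bigr => x _; rewrite -row_sum; apply: eq_bigr => y _.
rewrite sumrB split; lra.
Qed.
End Hamiltonian.

Arguments hop {d L R} i j.
Arguments sum_pt_mem {d L R} A.

Section Projections.
Variables (d L : nat) (R : realType).
Local Notation N := #|{: site d L}|.
Local Notation pt := (@pt d L).
Local Notation P := (projmx R).
Implicit Types (A B : {set site d L}) (M : 'M[R[i]]_N).

Lemma projmxE A i j : P A i j = ((pt i \in A) && (i == j))%:R.
Proof. by rewrite !mxE; case: (_ \in A); case: (i == j). Qed.

Lemma projmx_adj A : (P A)^t* = P A.
Proof.
apply/matrixP => i j; rewrite adjmxE !projmxE eq_sym.
by have [->|_] := eqVneq j i; rewrite conjC_nat ?andbF.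
Qed.

Lemma projmx_idem A : P A *m P A = P A.
Proof.
rewrite mul_diag_mx; apply/matrixP => i j; rewrite !mxE.
by case: (pt i \in A); rewrite ?mul1r ?mul0r ?mul0rn.
Qed.

Lemma projmx_setC A : P A + P (~: A) = 1%:M.
Proof.
apply/matrixP => i j; rewrite !mxE inE.
by case: (_ \in A); rewrite /= ?mul0rn ?add0r ?addr0.
Qed.

Lemma row_projmxE A (v : 'rV[R[i]]_N) k : (v *m P A) 0 k = v 0 k *+ (pt k \in A).
Proof. by rewrite mul_mx_diag !mxE mulr_natr. Qed.

Lemma projmx_sandwichE A B M i j :
  (P A *m M *m P B) i j = M i j *+ ((pt i \in A) && (pt j \in B)).
Proof. by rewrite mul_mx_diag mul_diag_mx !mxE mulr_natl mulr_natr -mulrnA mulnb. Qed.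

End Projections.

Section Boundary.
Variables (d L : nat) (R : realType) (mu U : R) (rhot : site d L -> R).
Variable Om : {set site d L}.
Local Notation N := #|{: site d L}|.
Local Notation pt := (@pt d L).
Local Notation P := (projmx R).
Local Notation H := (hamiltonian mu U rhot).

Lemma sqnorm_boundary_entry_le i j :
  sqnorm ((P Om *m H *m P (~: Om)) i j) <= (pt i \in bdry Om)%:R * hop i j.
Proof.
have rhs_ge0 : 0 <= (pt i \in bdry Om)%:R * (hop i j : R)
  by apply: mulr_ge0; [exact: ler0n | exact: hop_ge0].
rewrite projmx_sandwichE inE.
have [iOm|] := boolP (pt i \in Om); last by rewrite mulr0n sqnorm0.
have [//|jOm] := boolP (pt j \in Om); first by rewrite mulr0n sqnorm0.
have ne_ij : i != j by apply: contraNneq jOm => <-.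
rewrite mulr1n hamiltonianE /hamiltonian_entry (negbTE ne_ij) mul0r addr0 sqnormR sqrrN /hop.
case: eqP => [ij1|_]; last by rewrite /= mulr0n expr0n mulr0.
have -> : pt i \in bdry Om by rewrite inE iOm; apply/existsP; exists (pt j); rewrite jOm ij1.
by rewrite /= mulr1n expr1n mulr1.
Qed.

Lemma sqfrob_boundary_le : sqfrob (P Om *m H *m P (~: Om)) <= 2 * d%:R * #|bdry Om|%:R.
Proof.
rewrite -sum_pt_mem mulr_sumr; apply: ler_sum => i _.
apply: le_trans (_ : \sum_j (pt i \in bdry Om)%:R * hop i j <= _).
  by apply: ler_sum => j _; exact: sqnorm_boundary_entry_le.
by rewrite -mulr_sumr mulrC ler_wpM2r ?sum_hop_le.
Qed.

Lemma qform_hamiltonian_compl_ge c (v : 'rV[R[i]]_N) :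
  (forall x, x \notin Om -> c <= U * rhot x - mu) ->
  c * sqfrob (v *m P (~: Om)) <= qform H (v *m P (~: Om)).
Proof.
move=> c_le; apply: le_trans (qform_hamiltonian_ge _ _ _ _).
rewrite sqfrob_rowE mulr_sumr; apply: ler_sum => x _; rewrite row_projmxE.
have [|_] := boolP (pt x \in ~: Om); last by rewrite mulr0n sqnorm0 !mulr0.
by rewrite mulr1n inE => xOm; rewrite ler_wpM2r ?sqnorm_ge0 ?c_le.
Qed.

End Boundary.

Lemma negtrace_hamiltonian_ge (d L : nat) (R : realType) (mu U delta : R)
    (Om : {set site d L}) (rhot : site d L -> R) :
  0 < mu -> 0 < U -> 2 * mu / U < delta ->
  (forall x, x \notin Om -> delta <= rhot x) ->
  negtrace (projmx R Om *m hamiltonian mu U rhot *m projmx R Om)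
    - 8 * d%:R ^+ 2 / (U * delta) * #|bdry Om|%:R <= negtrace (hamiltonian mu U rhot).
Proof.
move=> mu_gt0 U_gt0 delta_gt rhot_ge.
have delta_gt0 : 0 < delta by apply: lt_trans delta_gt; rewrite !divr_gt0 ?mulr_gt0.
have mu_lt : mu < U * delta / 2 by move: delta_gt; rewrite ltr_pdivrMr // => ?; lra.
set t := 2 / (U * delta).
have t_gt0 : 0 < t by rewrite divr_gt0 ?mulr_gt0.
(* Off [Om] the potential opens the gap [U delta - mu >= U delta / 2 = t^-1]. *)
have gap x : x \notin Om -> t^-1 <= U * rhot x - mu.
  move=> /rhot_ge; rewrite -(ler_pM2l U_gt0) /t invf_div; lra.
have compress := negtrace_compression t_gt0 (hamiltonian_adj mu U rhot)
  (projmx_adj _ _) (projmx_adj _ _) (projmx_idem _ _) (projmx_setC _ _)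
  (fun v => qform_hamiltonian_compl_ge v gap).
have boundary := ler_wpM2l (ltW t_gt0) (sqfrob_boundary_le mu U rhot Om).
set B := #|bdry Om|%:R in boundary *.
have d_le : (d%:R : R) <= d%:R ^+ 2 by rewrite -natrX ler_nat; nia.
have cost : t * (2 * d%:R * B) <= 8 * d%:R ^+ 2 / (U * delta) * B.
  have kB_ge0 : 0 <= (U * delta)^-1 * B by rewrite mulr_ge0 ?invr_ge0 ?mulr_ge0 ?ler0n // ltW.
  have -> : t * (2 * d%:R * B) = (U * delta)^-1 * B * (4 * d%:R) by rewrite /t; ring.
  have -> : 8 * d%:R ^+ 2 / (U * delta) * B = (U * delta)^-1 * B * (8 * d%:R ^+ 2) by ring.
  by rewrite ler_wpM2l //; have := ler0n R d; lra.
lra.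
Qed.

Theorem lemma3p2 (d L : nat) (R : realType) (mu U delta : R)
  (gamma : 'M[R[i]]_#|{: site d L}|) :
  0 < mu -> 0 < U -> 2 * mu / U < delta ->
  density_matrix gamma ->
  let rho : site d L -> R := fun x => complex.Re (gamma (enum_rank x) (enum_rank x)) in
  let Om : {set site d L} := [set x | rho x < delta] in
  let rhot : site d L -> R :=
    fun x => if x \in Om then Num.min (mu / (2 * U)) (rho x) else rho x in
  let H := Kmx d L mu + U%:C%C *: multmx rhot in
  negtrace (projmx R Om *m H *m projmx R Om)
    - 8 * d%:R ^+ 2 / (U * delta) * #|bdry Om|%:R
  <= negtrace H.
Proof.
move=> mu_gt0 U_gt0 delta_gt _; apply: negtrace_hamiltonian_ge => // x xOm.
by rewrite (negbTE xOm); rewrite inE -leNgt in xOm.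
Qed.
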